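(* Let $n\ge1$. Let $\mathscr{R}_n$ be the lattice, ordered by inclusion, of all sets $\Gamma$ of relations on $[n]=\{1,\dots,n\}$ that are closed under $\{\exists,\forall,\wedge,\vee\}$-FO-definability, and let $\mathscr{F}_n$ be the lattice, ordered by inclusion, of all down-shop-monoids on $[n]$. Then $\mathscr{R}_n$ and $\mathscr{F}_n$ are isomorphic, and the operators $\mathrm{Inv}$ and $\mathrm{shE}$ induce isomorphisms between them.
   Context: $\{\exists,\forall,\wedge,\vee\}$-FO is positive first-order logic without equality. A set $\Gamma$ of relations on $[n]$ is closed under $\{\exists,\forall,\wedge,\vee\}$-FO-definability if every relation definable by a formula of that logic over the structure $([n];\Gamma)$ (with $\Gamma$ as a possibly countably infinite signature) already belongs to $\Gamma$. A multipermutation on $[n]$ is a map $f:[n]\to\mathcal{P}([n])\setminus\{\emptyset\}$ such that every $y$ lies in some $f(x)$. $f$ preserves $R\subseteq[n]^i$ if $(x_1,\dots,x_i)\in R$ and $y_j\in f(x_j)$ imply $(y_1,\dots,y_i)\in R$. $\mathrm{Inv}(F)$ is the set of relations preserved by all $f\in F$; $\mathrm{shE}(\Gamma)$ is the set of multipermutations preserving all relations in $\Gamma$. Composition $g\circ f$ is $x\mapsto\{z:\exists y\,(y\in f(x)\wedge z\in g(y))\}$, $f$ is a sub-multipermutation of $g$ if $f(x)\subseteq g(x)$ for all $x$; a down-shop-monoid (DSM) is a set of multipermutations containing the identity $x\mapsto\{x\}$ and closed under composition and under sub-multipermutations that are multipermutations. *)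

From mathcomp Require Import all_boot.
Set Implicit Arguments. Unset Strict Implicit. Unset Printing Implicit Defensive.

Section Defs.
Variable n : nat.

Definition relation := {i : nat & {set i.-tuple 'I_n}}.
Definition mkrel (i : nat) (R : {set i.-tuple 'I_n}) : relation := existT _ i R.

Definition relset := relation -> Prop.

(* Formulas of {exists, forall, and, or}-FO without equality (with the
   logical constants true/false), variables are natural numbers. *)
Inductive pfo : Type :=
| PTrue : pfo
| PFalse : pfo
| PAtom (i : nat) (R : {set i.-tuple 'I_n}) (vs : i.-tuple nat) : pfo
| PAnd : pfo -> pfo -> pfo
| POr : pfo -> pfo -> pfo
| PEx : nat -> pfo -> pfo
| PAll : nat -> pfo -> pfo.

Fixpoint over (Gamma : relset) (phi : pfo) : Prop :=
  match phi with
  | PTrue | PFalse => True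
  | PAtom i R _ => Gamma (mkrel R)
  | PAnd p q | POr p q => over Gamma p /\ over Gamma q
  | PEx _ p | PAll _ p => over Gamma p
  end.

Definition upd (a : nat -> 'I_n) (x : nat) (v : 'I_n) : nat -> 'I_n :=
  fun y => if y == x then v else a y.

Fixpoint sat (a : nat -> 'I_n) (phi : pfo) : Prop :=
  match phi with
  | PTrue => True
  | PFalse => False
  | PAtom i R vs => [tuple of map a vs] \in R
  | PAnd p q => sat a p /\ sat a q
  | POr p q => sat a p \/ sat a q
  | PEx x p => exists v, sat (upd a x v) p
  | PAll x p => forall v, sat (upd a x v) p
  end.

(* phi defines the i-ary relation R, variable j (j < i) standing for the
   j-th coordinate. *)
Definition defines (i : nat) (R : {set i.-tuple 'I_n}) (phi : pfo) : Prop :=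
  forall (t : i.-tuple 'I_n) (a : nat -> 'I_n),
    (forall j : 'I_i, a j = tnth t j) -> (t \in R <-> sat a phi).

Definition closed_pfo (Gamma : relset) : Prop :=
  forall (i : nat) (R : {set i.-tuple 'I_n}) (phi : pfo),
    over Gamma phi -> defines R phi -> Gamma (mkrel R).

Definition mfun := {ffun 'I_n -> {set 'I_n}}.
Definition funset := mfun -> Prop.

Definition is_mp (f : mfun) : Prop :=
  (forall x, f x != set0) /\ (forall y, exists x, y \in f x).

Definition preserves (f : mfun) (R : relation) : Prop :=
  forall x y : (projT1 R).-tuple 'I_n,
    x \in projT2 R -> (forall j, tnth y j \in f (tnth x j)) -> y \in projT2 R.

Definition Inv (F : funset) : relset :=
  fun R => forall f, F f -> preserves f R.

Definition shE (Gamma : relset) : funset :=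
  fun f => is_mp f /\ forall R, Gamma R -> preserves f R.

Definition mp_id : mfun := [ffun x => [set x]].
Definition mp_comp (g f : mfun) : mfun := [ffun x => \bigcup_(y in f x) g y].

Definition is_DSM (F : funset) : Prop :=
  [/\ forall f, F f -> is_mp f,
      F mp_id,
      forall f g, F f -> F g -> F (mp_comp g f)
    & forall f g, F g -> is_mp f -> (forall x, f x \subset g x) -> F f].

End Defs.

From Pilot Require Import Defs.
From mathcomp Require Import all_boot.
From mathcomp Require Import boolp.
Set Implicit Arguments. Unset Strict Implicit. Unset Printing Implicit Defensive.

(* shE Gamma is always a DSM, and Inv F is closed under positive definitions
   because a multipermutation preserving the atoms of a formula preserves the
   formula: totality handles the existential quantifiers and surjectivity the
   universal ones.

   For a DSM F and f in shE (Inv F), list the graph of f as a pair of tuples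
   (u, y).  The F-orbit of u is a relation of Inv F, so it contains y, which
   yields g in F with f x included in g x for all x; F is down-closed.

   For a closed Gamma, every R in Inv (shE Gamma) is the finite union of the
   Gamma-hulls of its tuples, so it suffices to see that r in R and s in the
   hull of r force s in R.  The Gamma-relation
     P t := forall y, exists z g, (t, y, z) in hull (r, g, id)
   contains r, hence s, so (s, id, z) lies in hull (r, g, id) for some g, z.
   Reading these two tuples column by column gives a multifunction mapping r
   to s; the two copies of id make it total and onto, and hull membership
   makes it preserve Gamma.  The lattice statements are then the usual
   bookkeeping of a Galois connection. *)

Section Definability.
Variables (n : nat) (Gamma : relset n).

Definition definable (P : (nat -> 'I_n) -> Prop) :=
  exists2 phi, Defs.over Gamma phi & forall a, sat a phi <-> P a.

Lemma definable_ext P Q : (forall a, P a <-> Q a) -> definable P -> definable Q.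
Proof. by move=> PQ [phi Gphi phiP]; exists phi => // a; rewrite phiP. Qed.

Lemma definable_atom k (R : {set k.-tuple 'I_n}) (vs : k.-tuple nat) :
  Gamma (mkrel R) -> definable (fun a => [tuple of map a vs] \in R).
Proof. by exists (PAtom R vs). Qed.

Lemma definable_and P Q :
  definable P -> definable Q -> definable (fun a => P a /\ Q a).
Proof.
by move=> [p Gp pP] [q Gq qQ]; exists (PAnd p q) => //= a; rewrite pP qQ.
Qed.

Lemma definable_or P Q :
  definable P -> definable Q -> definable (fun a => P a \/ Q a).
Proof.
by move=> [p Gp pP] [q Gq qQ]; exists (POr p q) => //= a; rewrite pP qQ.
Qed.

Lemma definable_all x P :
  definable P -> definable (fun a => forall v, P (upd a x v)).
Proof.
by move=> [p Gp pP]; exists (PAll x p) => //= a; split=> h v; apply/pP.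
Qed.

Lemma definable_ex x P :
  definable P -> definable (fun a => exists v, P (upd a x v)).
Proof.
by move=> [p Gp pP]; exists (PEx x p) => //= a; split=> -[v /pP]; exists v.
Qed.

Lemma definable_forall_fin (T : finType) (Q : T -> Prop) P :
  (forall x, Q x -> definable (P x)) ->
  definable (fun a => forall x, Q x -> P x a).
Proof.
move=> defP; suff: forall s : seq T,
    definable (fun a => forall x, x \in s -> Q x -> P x a).
  move/(_ (enum T)); apply: definable_ext => a.
  by split=> h x => [|_]; apply: h; rewrite ?mem_enum.
elim=> [|y s IHs]; first by exists (PTrue n).
have [Qy|nQy] := pselect (Q y).
  apply: definable_ext (definable_and (defP y Qy) IHs) => a.
  split=> [[Py Ps] x|h]; first by rewrite in_cons => /orP[/eqP->|/Ps].
  by split=> [|x xs]; apply: h; rewrite ?mem_head ?in_cons ?xs ?orbT.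
apply: definable_ext IHs => a; split=> [h x|h x xs]; last first.
  by apply: h; rewrite in_cons xs orbT.
by rewrite in_cons => /orP[/eqP->//|/h].
Qed.

Lemma definable_exists_fin (T : finType) (Q : T -> Prop) P :
  (forall x, Q x -> definable (P x)) ->
  definable (fun a => exists2 x, Q x & P x a).
Proof.
move=> defP; suff: forall s : seq T,
    definable (fun a => exists2 x, x \in s /\ Q x & P x a).
  move/(_ (enum T)); apply: definable_ext => a.
  split=> -[x]; first by case=> _ Qx Px; exists x.
  by move=> Qx Px; exists x; first split; rewrite ?mem_enum.
elim=> [|y s IHs]; first by exists (PFalse n) => // a; split=> // -[x []].
have [Qy|nQy] := pselect (Q y).
  apply: definable_ext (definable_or (defP y Qy) IHs) => a.
  split=> [[Py|[x [xs Qx] Px]]|[x [+ Qx] Px]].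
  - by exists y; rewrite ?mem_head.
  - by exists x; rewrite ?in_cons ?xs ?orbT.
  by rewrite in_cons => /orP[/eqP<-|xs]; [left|right; exists x].
apply: definable_ext IHs => a; split=> -[x [xs Qx] Px]; exists x => //.
  by rewrite in_cons xs orbT.
by move: xs; rewrite in_cons => /orP[/eqP xy|]; [rewrite xy in Qx|].
Qed.

Definition upds (a : nat -> 'I_n) (xs : seq nat) (g : nat -> 'I_n) :=
  fun v => if v \in xs then g v else a v.

Lemma upds_cons a x xs g : upds a (x :: xs) g = upds (upd a x (g x)) xs g.
Proof.
apply: funext => v; rewrite /upds /upd in_cons.
by case: eqP => [->|_]; case: ifP.
Qed.

Lemma upd_upds a x v xs g :
  upds (upd a x v) xs g = upds a (x :: xs) (upds (fun=> v) xs g).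
Proof.
apply: funext => y; rewrite /upds /upd in_cons.
by case: eqP => [->|_]; case: ifP.
Qed.

Lemma definable_all_vars xs P :
  definable P -> definable (fun a => forall g, P (upds a xs g)).
Proof.
elim: xs P => [|x xs IHxs] P defP.
  by apply: definable_ext defP => a; split=> [Pa g //|/(_ a)].
apply: definable_ext (definable_all x (IHxs P defP)) => a.
split=> [h g|h v g]; first by rewrite upds_cons; apply: h.
by rewrite upd_upds; apply: h.
Qed.

Lemma definable_ex_vars xs P :
  definable P -> definable (fun a => exists g, P (upds a xs g)).
Proof.
elim: xs P => [|x xs IHxs] P defP.
  by apply: definable_ext defP => a; split=> [Pa|[]//]; exists a.
apply: definable_ext (definable_ex x (IHxs P defP)) => a.
split=> [[v [g Pg]]|[g Pg]]; last by exists (g x), g; rewrite -upds_cons.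
by exists (upds (fun=> v) xs g); rewrite -upd_upds.
Qed.

Definition prefix_tuple k (a : nat -> 'I_n) : k.-tuple 'I_n :=
  [tuple of map a (iota 0 k)].

Lemma tnth_prefix_tuple k a (j : 'I_k) : tnth (prefix_tuple k a) j = a j.
Proof. by rewrite tnth_map (tnth_nth 0) /= nth_iota. Qed.

Lemma prefix_tuple_upds_iota k m a g :
  prefix_tuple (k + m) (upds a (iota k m) g) =
  [tuple of prefix_tuple k a ++ prefix_tuple m (fun j => g (k + j))].
Proof.
apply: val_inj; rewrite /= iotaD map_cat add0n; congr (_ ++ _).
  apply/eq_in_map => v; rewrite mem_iota /upds mem_iota => /andP[_ vk].
  by rewrite leqNgt vk.
transitivity (map g (iota k m)).
  by apply/eq_in_map => v; rewrite /upds => ->.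
by rewrite -[k in iota k m]addn0 iotaDl -map_comp.
Qed.

Lemma prefix_tuple_shift_onto k m (a0 : 'I_n) (y : m.-tuple 'I_n) :
  prefix_tuple m (fun j => nth a0 y (k + j - k)) = y.
Proof.
by apply: eq_from_tnth => j; rewrite tnth_prefix_tuple addKn -tnth_nth.
Qed.

Lemma definable_rel k (R : {set k.-tuple 'I_n}) :
  Gamma (mkrel R) -> definable (fun a => prefix_tuple k a \in R).
Proof. exact: definable_atom. Qed.

End Definability.

Section Multipermutations.
Variable n : nat.
Implicit Types (f g : mfun n) (R : relation n).
Implicit Types (F : funset n) (Gamma : relset n).

Lemma is_mp_id : is_mp (mp_id n).
Proof. by split=> x; [apply/set0Pn|]; exists x; rewrite ffunE set11. Qed.

Lemma mem_mp_comp g f x z :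
  reflect (exists2 y, y \in f x & z \in g y) (z \in mp_comp g f x).
Proof. by rewrite ffunE; apply: (iffP bigcupP) => -[y]; exists y. Qed.

Lemma is_mp_comp g f : is_mp g -> is_mp f -> is_mp (mp_comp g f).
Proof.
move=> [neg surg] [nef surf]; split=> [x|z].
  have /set0Pn[y fxy] := nef x; have /set0Pn[z gyz] := neg y.
  by apply/set0Pn; exists z; apply/mem_mp_comp; exists y.
have [y gyz] := surg z; have [x fxy] := surf y.
by exists x; apply/mem_mp_comp; exists y.
Qed.

Lemma preserves_id R : preserves (mp_id n) R.
Proof.
move=> x y Rx xy; suff -> : y = x by [].
by apply: eq_from_tnth => j; move: (xy j); rewrite ffunE => /set1P.
Qed.

Lemma preserves_comp g f R :
  preserves g R -> preserves f R -> preserves (mp_comp g f) R.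
Proof.
move=> pg pf x z Rx xz.
have /fin_all_exists[y xyz] j :
    exists y, y \in f (tnth x j) /\ tnth z j \in g y.
  by have /mem_mp_comp[y] := xz j; exists y.
have Ry : [tuple y j | j < projT1 R] \in projT2 R.
  by apply: (pf x) => // j; rewrite tnth_mktuple; case: (xyz j).
by apply: (pg _ _ Ry) => j; rewrite tnth_mktuple; case: (xyz j).
Qed.

Lemma preserves_sub f g R :
  (forall x, f x \subset g x) -> preserves g R -> preserves f R.
Proof.
by move=> fg pg x y Rx xy; apply: (pg x) => // j; apply: subsetP (fg _) _ _.
Qed.

Definition mp_of_tuples k (rho sigma : k.-tuple 'I_n) : mfun n :=
  [ffun x => [set tnth sigma j | j in [set j | tnth rho j == x]]].

Lemma mem_mp_of_tuples k (rho sigma : k.-tuple 'I_n) x y :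
  reflect (exists j, tnth rho j = x /\ tnth sigma j = y)
          (y \in mp_of_tuples rho sigma x).
Proof.
rewrite ffunE; apply: (iffP imsetP) => [[j]|[j [rhoj <-]]].
  by rewrite inE => /eqP rhoj ->; exists j.
by exists j; rewrite ?inE ?rhoj.
Qed.

Lemma is_mp_of_tuples k (rho sigma : k.-tuple 'I_n) :
  (forall x, exists j, tnth rho j = x) ->
  (forall y, exists j, tnth sigma j = y) ->
  is_mp (mp_of_tuples rho sigma).
Proof.
move=> rho_onto sigma_onto; split=> [x|y].
  have [j rhoj] := rho_onto x.
  by apply/set0Pn; exists (tnth sigma j); apply/mem_mp_of_tuples; exists j.
have [j sigmaj] := sigma_onto y.
by exists (tnth rho j); apply/mem_mp_of_tuples; exists j.
Qed.

Lemma shE_DSM Gamma : is_DSM (shE Gamma).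
Proof.
split=> [f [] //| |f g [mpf pf] [mpg pg]|f g [_ pg] mpf fg].
- by split=> [|R _]; [exact: is_mp_id|exact: preserves_id].
- split=> [|R GR]; first exact: is_mp_comp.
  exact: preserves_comp (pg R GR) (pf R GR).
- by split=> // R GR; exact: preserves_sub fg (pg R GR).
Qed.

Lemma sat_preserved Gamma f :
  is_mp f -> (forall R, Gamma R -> preserves f R) ->
  forall phi, Defs.over Gamma phi -> forall a b, (forall v, b v \in f (a v)) ->
  sat a phi -> sat b phi.
Proof.
move=> [nef surf] pf; elim=> //=.
- move=> k R vs GR a b ab Ra.
  by apply: (pf _ GR _ [tuple of map b vs] Ra) => j; rewrite !tnth_map.
- move=> p IHp q IHq [Gp Gq] a b ab [pa qa].
  by split; [apply: IHp pa|apply: IHq qa].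
- move=> p IHp q IHq [Gp Gq] a b ab [pa|qa].
    by left; apply: IHp pa.
  by right; apply: IHq qa.
- move=> x p IHp Gp a b ab [v pv]; have /set0Pn[w fvw] := nef v.
  by exists w; apply: IHp pv => // y; rewrite /upd; case: eqP.
- move=> x p IHp Gp a b ab pa w; have [v fvw] := surf w.
  by apply: IHp (pa v) => // y; rewrite /upd; case: eqP.
Qed.

Lemma Inv_closed (x0 : 'I_n) F :
  (forall f, F f -> is_mp f) -> closed_pfo (Inv F).
Proof.
move=> mpF k R phi Gphi phiR f Ff x y /= Rx xy.
have /set0Pn[y0 fx0y0] := (mpF f Ff).1 x0.
apply/(phiR y (nth y0 y)) => [j|]; first by rewrite -tnth_nth.
apply: (sat_preserved (mpF f Ff) _ Gphi (a := nth x0 x)) => [R' InvR'|v|].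
- exact: InvR'.
- have [vk|kv] := ltnP v k; last by rewrite !nth_default ?size_tuple.
  by rewrite -[v]/(val (Ordinal vk)) -!tnth_nth.
by apply/(phiR x) => // j; rewrite -tnth_nth.
Qed.

End Multipermutations.

Section Orbits.
Variables (n : nat) (F : funset n).

Definition orbit k (u : k.-tuple 'I_n) : {set k.-tuple 'I_n} :=
  [set y | `[< exists2 g, F g & forall j, tnth y j \in g (tnth u j) >]].

Lemma mem_orbit k (u : k.-tuple 'I_n) : F (mp_id n) -> u \in orbit u.
Proof.
move=> Fid; rewrite inE; apply/asboolP.
by exists (mp_id n) => // j; rewrite ffunE set11.
Qed.

Lemma Inv_orbit k (u : k.-tuple 'I_n) :
  (forall f g, F f -> F g -> F (mp_comp g f)) -> Inv F (mkrel (orbit u)).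
Proof.
move=> Fcomp h Fh y z /=; rewrite !inE => /asboolP[g Fg uy] yz.
apply/asboolP; exists (mp_comp h g) => [|j]; first exact: Fcomp.
by apply/mem_mp_comp; exists (tnth y j).
Qed.

Lemma shE_Inv_sub f : is_DSM F -> shE (Inv F) f -> F f.
Proof.
case=> _ Fid Fcomp Fsub [mpf pf].
pose A := [set p : 'I_n * 'I_n | p.2 \in f p.1].
pose u := [tuple (enum_val j).1 | j < #|A|].
pose y := [tuple (enum_val j).2 | j < #|A|].
have : y \in orbit u.
  apply: (pf _ (Inv_orbit (u := u) Fcomp) u y (mem_orbit u Fid)) => j.
  by rewrite !tnth_mktuple; have := enum_valP j; rewrite inE.
rewrite inE => /asboolP[g Fg ug]; apply: (Fsub f g Fg mpf) => x.
apply/subsetP => b fxb; have Axb : (x, b) \in A by rewrite inE.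
by have := ug (enum_rank_in Axb (x, b)); rewrite !tnth_mktuple enum_rankK_in.
Qed.

End Orbits.

Section ClosedRelations.
Variables (n : nat) (Gamma : relset n).
Hypothesis Gamma_closed : closed_pfo Gamma.

Lemma closed_definable k (R : {set k.-tuple 'I_n}) :
  definable Gamma (fun a => prefix_tuple k a \in R) -> Gamma (mkrel R).
Proof.
move=> [phi Gphi phiR]; apply: (Gamma_closed Gphi) => t a at_.
suff -> : t = prefix_tuple k a by rewrite phiR.
by apply: eq_from_tnth => j; rewrite tnth_prefix_tuple at_.
Qed.

Lemma closed_bigcap k (T : finType) (Q : T -> Prop)
    (D : T -> {set k.-tuple 'I_n}) :
  (forall x, Q x -> Gamma (mkrel (D x))) ->
  Gamma (mkrel [set t | `[< forall x, Q x -> t \in D x >]]).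
Proof.
move=> GD; have := definable_forall_fin (fun x Qx => definable_rel (GD x Qx)).
by move/(definable_ext _)/closed_definable; apply=> a; rewrite inE asboolE.
Qed.

Lemma closed_bigcup k (T : finType) (Q : T -> Prop)
    (D : T -> {set k.-tuple 'I_n}) :
  (forall x, Q x -> Gamma (mkrel (D x))) ->
  Gamma (mkrel [set t | `[< exists2 x, Q x & t \in D x >]]).
Proof.
move=> GD; have := definable_exists_fin (fun x Qx => definable_rel (GD x Qx)).
by move/(definable_ext _)/closed_definable; apply=> a; rewrite inE asboolE.
Qed.

Lemma closed_preimage k N (Q : {set k.-tuple 'I_n}) (m : 'I_k -> 'I_N) :
  Gamma (mkrel Q) ->
  Gamma (mkrel [set t : N.-tuple 'I_n | [tuple tnth t (m j) | j < k] \in Q]).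
Proof.
move=> GQ; apply: closed_definable
  (definable_ext _ (definable_atom [tuple val (m j) | j < k] GQ)) => a.
rewrite inE.
suff -> : [tuple tnth (prefix_tuple N a) (m j) | j < k] =
          [tuple of map a [tuple val (m j) | j < k]] by [].
by apply: eq_from_tnth => j; rewrite tnth_map !tnth_mktuple tnth_prefix_tuple.
Qed.

Lemma closed_forall_cat k m (Q : {set (k + m).-tuple 'I_n}) :
  Gamma (mkrel Q) ->
  Gamma (mkrel [set t : k.-tuple 'I_n |
                `[< forall y : m.-tuple 'I_n, [tuple of t ++ y] \in Q >]]).
Proof.
move/definable_rel/(definable_all_vars (iota k m))=> defQ.
apply/closed_definable/(definable_ext _ defQ) => a; rewrite inE asboolE.
split=> [Qa y|Qa g]; last by rewrite prefix_tuple_upds_iota.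
have := Qa (fun v => nth (a 0) y (v - k)).
by rewrite prefix_tuple_upds_iota prefix_tuple_shift_onto.
Qed.

Lemma closed_exists_cat k m (Q : {set (k + m).-tuple 'I_n}) :
  Gamma (mkrel Q) ->
  Gamma (mkrel [set t : k.-tuple 'I_n |
                `[< exists y : m.-tuple 'I_n, [tuple of t ++ y] \in Q >]]).
Proof.
move/definable_rel/(definable_ex_vars (iota k m))=> defQ.
apply/closed_definable/(definable_ext _ defQ) => a; rewrite inE asboolE.
split=> [[g]|[y Qy]].
  by rewrite prefix_tuple_upds_iota => Qg; eexists; exact: Qg.
exists (fun v => nth (a 0) y (v - k)).
by rewrite prefix_tuple_upds_iota prefix_tuple_shift_onto.
Qed.

Definition hull k (rho : k.-tuple 'I_n) : {set k.-tuple 'I_n} :=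
  [set t | `[< forall D, Gamma (mkrel D) /\ rho \in D -> t \in D >]].

Lemma hull_closed k (rho : k.-tuple 'I_n) : Gamma (mkrel (hull rho)).
Proof. by apply: (closed_bigcap (D := id)) => D []. Qed.

Lemma mem_hull k (rho : k.-tuple 'I_n) : rho \in hull rho.
Proof. by rewrite inE; apply/asboolP => D []. Qed.

Lemma hull_min k (rho t : k.-tuple 'I_n) (D : {set k.-tuple 'I_n}) :
  Gamma (mkrel D) -> rho \in D -> t \in hull rho -> t \in D.
Proof. by move=> GD rhoD; rewrite inE => /asboolP; apply. Qed.

Lemma preserves_mp_of_tuples k (rho sigma : k.-tuple 'I_n) R :
  sigma \in hull rho -> Gamma R -> preserves (mp_of_tuples rho sigma) R.
Proof.
case: R => l Q sigma_hull GQ x y /= Qx xy.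
have /fin_all_exists[m mP] j :
    exists m, tnth rho m = tnth x j /\ tnth sigma m = tnth y j.
  exact/mem_mp_of_tuples/xy.
have GD := closed_preimage m GQ.
have /(hull_min GD) : rho \in [set t | [tuple tnth t (m j) | j < l] \in Q].
  rewrite inE; suff -> : [tuple tnth rho (m j) | j < l] = x by [].
  by apply: eq_from_tnth => j; rewrite tnth_mktuple (mP j).1.
move/(_ sigma sigma_hull); rewrite inE.
suff -> : [tuple tnth sigma (m j) | j < l] = y by [].
by apply: eq_from_tnth => j; rewrite tnth_mktuple (mP j).2.
Qed.

Lemma Inv_shE_hull i (R : {set i.-tuple 'I_n}) (r s : i.-tuple 'I_n) :
  Inv (shE Gamma) (mkrel R) -> r \in R -> s \in hull r -> s \in R.
Proof.
move=> InvR Rr s_hull.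
pose rho (g : n.-tuple 'I_n) := [tuple of [tuple of r ++ g] ++ ord_tuple n].
pose U := [set t | `[< exists2 g, True & t \in hull (rho g) >]].
pose V := [set u : (i + n).-tuple 'I_n |
           `[< exists z : n.-tuple 'I_n, [tuple of u ++ z] \in U >]].
pose P := [set t : i.-tuple 'I_n |
           `[< forall y : n.-tuple 'I_n, [tuple of t ++ y] \in V >]].
have GP : Gamma (mkrel P).
  apply/closed_forall_cat/closed_exists_cat.
  by apply: closed_bigcup => g _; apply: hull_closed.
have rP : r \in P.
  rewrite inE; apply/asboolP => g; rewrite inE; apply/asboolP.
  exists (ord_tuple n); rewrite inE; apply/asboolP.
  by exists g => //; apply: mem_hull.
move: (hull_min GP rP s_hull); rewrite inE => /asboolP/(_ (ord_tuple n)).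
rewrite inE => /asboolP[z]; rewrite inE => /asboolP[g _].
set sigma := [tuple of _ ++ z] => sigma_hull.
have f_shE : shE Gamma (mp_of_tuples (rho g) sigma).
  split=> [|R' GR']; last exact: preserves_mp_of_tuples.
  apply: is_mp_of_tuples => [x|y].
    by exists (rshift (i + n) x); rewrite tnth_rshift tnth_ord_tuple.
  exists (lshift n (rshift i y)).
  by rewrite tnth_lshift tnth_rshift tnth_ord_tuple.
apply: (InvR _ f_shE r s Rr) => j; apply/mem_mp_of_tuples.
by exists (lshift n (lshift n j)); rewrite !tnth_lshift.
Qed.

Lemma Inv_shE_sub R : Inv (shE Gamma) R -> Gamma R.
Proof.
case: R => i R InvR.
have -> : R = [set t | `[< exists2 r, r \in R & t \in hull r >]].
  apply/setP => t; rewrite inE; apply/idP/asboolP => [Rt|[r Rr]].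
    by exists t; last exact: mem_hull.
  exact: Inv_shE_hull.
by apply: closed_bigcup => r _; apply: hull_closed.
Qed.

End ClosedRelations.

Section GaloisConnection.
Variable n : nat.

Lemma Inv_shE_sup (Gamma : relset n) R : Gamma R -> Inv (shE Gamma) R.
Proof. by move=> GR f [_ pf]; apply: pf. Qed.

Lemma shE_Inv_sup (F : funset n) f :
  (forall g, F g -> is_mp g) -> F f -> shE (Inv F) f.
Proof. by move=> mpF Ff; split=> [|R InvR]; [apply: mpF|apply: InvR]. Qed.

Lemma shE_antitone (Gamma1 Gamma2 : relset n) :
  (forall R, Gamma1 R -> Gamma2 R) -> forall f, shE Gamma2 f -> shE Gamma1 f.
Proof. by move=> G12 f [mpf pf]; split=> // R /G12; apply: pf. Qed.

Lemma Inv_antitone (F1 F2 : funset n) :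
  (forall f, F1 f -> F2 f) -> forall R, Inv F2 R -> Inv F1 R.
Proof. by move=> F12 R InvR f /F12; apply: InvR. Qed.

End GaloisConnection.

Theorem corollary2p6 (n : nat) : 0 < n ->
  (forall Gamma : relset n, closed_pfo Gamma ->
     is_DSM (shE Gamma) /\ (forall R, Inv (shE Gamma) R <-> Gamma R)) /\
  (forall F : funset n, is_DSM F ->
     closed_pfo (Inv F) /\ (forall f, shE (Inv F) f <-> F f)) /\
  (forall Gamma1 Gamma2 : relset n, closed_pfo Gamma1 -> closed_pfo Gamma2 ->
     ((forall R, Gamma1 R -> Gamma2 R) <->
      (forall f, shE Gamma2 f -> shE Gamma1 f))) /\
  (forall F1 F2 : funset n, is_DSM F1 -> is_DSM F2 ->
     ((forall f, F1 f -> F2 f) <-> (forall R, Inv F2 R -> Inv F1 R))).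
Proof.
move=> n_gt0.
have InvshE (Gamma : relset n) :
    closed_pfo Gamma -> forall R, Inv (shE Gamma) R <-> Gamma R.
  by move=> Gamma_closed R; split; [apply: Inv_shE_sub|apply: Inv_shE_sup].
have shEInv (F : funset n) : is_DSM F -> forall f, shE (Inv F) f <-> F f.
  move=> F_DSM f; split; first exact: shE_Inv_sub.
  by apply: shE_Inv_sup; case: F_DSM.
split; [|split; [|split]].
- by move=> Gamma Gamma_closed; split; [apply: shE_DSM|apply: InvshE].
- move=> F F_DSM; split; last exact: shEInv.
  by apply: (Inv_closed (Ordinal n_gt0)); case: F_DSM.
- move=> Gamma1 Gamma2 G1 G2; split=> [|shE21 R]; first exact: shE_antitone.
  by rewrite -(InvshE _ G1) -(InvshE _ G2); apply: Inv_antitone.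
- move=> F1 F2 F1_DSM F2_DSM; split=> [|Inv21 f]; first exact: Inv_antitone.
  by rewrite -(shEInv _ F1_DSM) -(shEInv _ F2_DSM); apply: shE_antitone.
Qed.
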